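(* For each $L\in\{3,4,5,6\}$, the class of I$^2$-GNNs can count $L$-cycles at node level: for all node-graph pairs $(i_1,G_1),(i_2,G_2)$ with $C(L\text{-cycle},i_1,G_1)\ne C(L\text{-cycle},i_2,G_2)$, there exists an I$^2$-GNN whose node representations satisfy $h_{i_1}(G_1)\ne h_{i_2}(G_2)$.
   Context: Graphs are finite, simple, undirected, $G=(V,E)$, possibly carrying node attributes $x_v$ and edge attributes $e_{u,v}$ (a fixed constant when absent). $N(v)$ is the neighbour set of $v$. For $L\ge 3$, an $L$-cycle is a sequence of edges $(v_1,v_2),\dots,(v_L,v_{L+1})$ with $v_1,\dots,v_L$ pairwise distinct and $v_{L+1}=v_1$; two cycles are identified when their edge sets coincide; $C(L\text{-cycle},i,G)$ is the number of inequivalent $L$-cycles containing node $i$. A class $\mathcal F$ of functions on node-graph pairs can count $S$ at node level if for all $(i_1,G_1),(i_2,G_2)$ with $C(S,i_1,G_1)\ne C(S,i_2,G_2)$ there is $f\in\mathcal F$ with $f(i_1,G_1)\ne f(i_2,G_2)$. I$^2$-GNNs. An I$^2$-GNN is specified by an integer $K\ge1$, $T$, arbitrary functions $M_t$ (values in some $\mathbb R^{d_t}$), $U_t$, and arbitrary readouts $R_{\text{edge}},R_{\text{node}}$ on finite multisets. For each root $i\in V$ let $(V_i,E_i)$ be the subgraph of $G$ induced by nodes at shortest-path distance at most $K$ from $i$, and $N_i(k)=\{l\in V_i:(k,l)\in E_i\}$. For each $j\in N(i)$ and $k\in V_i$: $h^{(0)}_{i,j,k}=x_k\oplus\mathbb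 1_{k=i}\oplus\mathbb 1_{k=j}$ ($\oplus$ = concatenation), $h^{(t+1)}_{i,j,k}=U_t\big(h^{(t)}_{i,j,k},\sum_{l\in N_i(k)}M_t(h^{(t)}_{i,j,k},h^{(t)}_{i,j,l},e_{k,l})\big)$; then $h_{i,j}=R_{\text{edge}}(\{\!\{h^{(T)}_{i,j,k}:k\in V_i\}\!\})$ and $h_i=R_{\text{node}}(\{\!\{h_{i,j}:j\in N(i)\}\!\})$. The node-level function computed is $(i,G)\mapsto h_i$; the class of I$^2$-GNNs consists of all such choices. *)

From HB Require Import structures.
From mathcomp Require Import all_boot all_order all_algebra.
From mathcomp Require Import finmap multiset.
From mathcomp Require Import reals.
Set Implicit Arguments. Unset Strict Implicit. Unset Printing Implicit Defensive.
Import Order.TTheory GRing.Theory Num.Theory.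
Local Open Scope ring_scope.

Record graph (R : realType) (dx de : nat) (V : finType) := Graph {
  adj : rel V;
  adj_sym : symmetric adj;
  adj_irr : irreflexive adj;
  xattr : V -> 'rV[R]_dx;
  eattr : V -> V -> 'rV[R]_de;
  eattr_sym : forall u v, eattr u v = eattr v u }.

Section GraphDefs.
Variables (R : realType) (dx de : nat) (V : finType) (G : graph R dx de V).

Definition nbhd (v : V) : {set V} := [set u | adj G v u].

Fixpoint ball (n : nat) (i : V) : {set V} :=
  match n with
  | 0 => [set i]
  | n'.+1 => ball n' i :|: \bigcup_(u in ball n' i) nbhd u
  end.

(* edge set of the closed walk v_1 -> v_2 -> ... -> v_L -> v_1; edges are
   unordered pairs, represented as 2-element sets *)
Definition cycle_edges (s : seq V) : {set {set V}} :=
  [set [set x; next s x] | x in s].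

Definition is_Lcycle (L : nat) (s : L.-tuple V) : bool :=
  uniq s && cycle (adj G) s.

(* C(L-cycle, i, G): number of L-cycles containing i, cycles being identified
   when their edge sets coincide *)
Definition count_cycles (L : nat) (i : V) : nat :=
  #|[set cycle_edges (tval s) | s in [pred s : L.-tuple V | is_Lcycle s && (i \in tval s)]]|.
End GraphDefs.

(* dimension of the hidden states at layer t: layer 0 is x_k (+) 1 (+) 1 *)
Definition hdim (dx : nat) (dim : nat -> nat) (t : nat) : nat :=
  if t is t'.+1 then dim t' else (dx + 1 + 1)%N.

Record I2GNN (R : realType) (dx de : nat) := MkI2GNN {
  gK : nat;
  gK_pos : (0 < gK)%N;
  gT : nat;
  gdim : nat -> nat;                      (* hidden dim at layer t+1 *)
  gmdim : nat -> nat;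
  gM : forall t, 'rV[R]_(hdim dx gdim t) -> 'rV[R]_(hdim dx gdim t) -> 'rV[R]_de
                 -> 'rV[R]_(gmdim t);
  gU : forall t, 'rV[R]_(hdim dx gdim t) -> 'rV[R]_(gmdim t)
                 -> 'rV[R]_(hdim dx gdim t.+1);
  gpe : nat;
  gpn : nat;
  gRedge : {mset 'rV[R]_(hdim dx gdim gT)}%mset -> 'rV[R]_gpe;
  gRnode : {mset 'rV[R]_gpe}%mset -> 'rV[R]_gpn }.

Section I2GNNDefs.
Variables (R : realType) (dx de : nat) (g : I2GNN R dx de).
Variables (V : finType) (G : graph R dx de V).

Definition Vi (i : V) : {set V} := ball G (gK g) i.
Definition Ni (i k : V) : {set V} := [set l in Vi i | (k \in Vi i) && adj G k l].

Definition indic (b : bool) : 'rV[R]_1 := \row_(_ < 1) (b%:R).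

Fixpoint hstate (i j : V) (t : nat) : V -> 'rV[R]_(hdim dx (gdim g) t) :=
  match t return V -> 'rV[R]_(hdim dx (gdim g) t) with
  | 0 => fun k => row_mx (row_mx (xattr G k) (indic (k == i))) (indic (k == j))
  | t'.+1 => fun k =>
      @gU R dx de g t' (hstate i j t' k)
        (\sum_(l in Ni i k) @gM R dx de g t' (hstate i j t' k) (hstate i j t' l) (eattr G k l))
  end.

Definition hedge (i j : V) : 'rV[R]_(gpe g) :=
  @gRedge R dx de g (seq_mset [seq hstate i j (gT g) k | k <- enum (Vi i)]).

Definition hnode (i : V) : 'rV[R]_(gpn g) :=
  @gRnode R dx de g (seq_mset [seq hedge i j | j <- enum (nbhd G i)]).
End I2GNNDefs.

(* Each L-cycle through i is traversed by exactly two sequences (i, v_2, ..., v_L), one per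
   orientation, so twice the cycle count is the number of such rooted sequences.  Once the
   second vertex j (a neighbour of i) is fixed, inclusion-exclusion over the possible vertex
   repetitions writes this number, for L <= 6, as a sum over all nodes k of a polynomial in
   a few walk counts between k and the marked nodes i and j: adjacency to i and to j, common
   neighbours, paths of length three.  An I^2-GNN rooted at i with marked neighbour j computes
   these walk counts at every node in three rounds of message passing, which is exact on the
   K-hop subgraph once K >= |V|; summing over k (edge readout) and over j (node readout)
   returns twice the cycle count.  For L = 6 one correction term, coming from a chord between
   i and the third vertex, is not such a node sum, but after exchanging the roles of j and of
   the chord vertex it becomes a product of two node sums minus a third one, which the edge
   readout computes as well. *)

From HB Require Import structures.
From mathcomp Require Import all_boot all_order all_algebra.
From mathcomp Require Import finmap multiset.
From mathcomp Require Import reals.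
From mathcomp Require Import ring.
Set Implicit Arguments. Unset Strict Implicit. Unset Printing Implicit Defensive.
Import Order.TTheory GRing.Theory Num.Theory.
Local Open Scope ring_scope.

Section Indicator.
Context {R : comRingType} {V : finType}.

Definition ind (b : bool) : R := if b then 1 else 0.

Lemma ind_andb a b : ind (a && b) = ind a * ind b.
Proof. by case: a; case: b; rewrite /= ?mul0r ?mul1r. Qed.

Lemma ind_negb b : ind (~~ b) = 1 - ind b.
Proof. by case: b; rewrite /= ?subr0 ?subrr. Qed.

Lemma sum_ind_andN (P : pred V) x :
  \sum_t ind (P t && (t != x)) = \sum_t ind (P t) - ind (P x).
Proof.
rewrite [in RHS](bigD1 x) //= [LHS](bigD1 x) //= eqxx andbF add0r.
by rewrite [X in _ = X - _]addrC addrK; apply: eq_bigr => t /negPf ->; rewrite andbT.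
Qed.

Lemma sum_ind_andN_mul (P : pred V) (F : V -> R) x :
  \sum_t ind (P t && (t != x)) * F t = \sum_t ind (P t) * F t - ind (P x) * F x.
Proof.
rewrite [in RHS](bigD1 x) //= [LHS](bigD1 x) //= eqxx andbF mul0r add0r.
by rewrite [X in _ = X - _]addrC addrK; apply: eq_bigr => t /negPf ->; rewrite andbT.
Qed.

Lemma sum_ind_eq (F : V -> R) x : \sum_t F t * ind (t == x) = F x.
Proof.
rewrite (bigD1 x) //= eqxx mulr1 big1 ?addr0 // => t /negPf ->.
exact: mulr0.
Qed.
End Indicator.

Lemma adj_neq (T : eqType) (e : rel T) : irreflexive e -> forall x y, e x y -> x != y.
Proof. by move=> e_irr x y; apply: contraTneq => ->; rewrite e_irr. Qed.

Lemma set2_inj (T : finType) (x y z w : T) : z != w -> [set x; y] = [set z; w] ->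
  (x = z /\ y = w) \/ (x = w /\ y = z).
Proof.
move=> zw E.
have /set2P[xz|xw] : x \in [set z; w] by rewrite -E set21.
  left; split => //; have /set2P[wx|] // : w \in [set x; y] by rewrite E set22.
  by rewrite wx xz eqxx in zw.
right; split => //; have /set2P[zx|] // : z \in [set x; y] by rewrite E set21.
by rewrite zx xw eqxx in zw.
Qed.

Lemma next_nth_uniq (T : eqType) (x0 : T) (s : seq T) k : uniq s -> (k.+1 < size s)%N ->
  next s (nth x0 s k) = nth x0 s k.+1.
Proof.
move=> us ks; rewrite next_nth mem_nth ?(ltnW ks) //.
case: s us ks => [//|y p] us ks.
by rewrite index_uniq ?(ltnW ks) //=; apply: set_nth_default.
Qed.

Lemma mem_cycle_edges (T : finType) (e : rel T) (s : seq T) x y :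
  irreflexive e -> cycle e s ->
  [set x; y] \in cycle_edges s -> y = next s x \/ x = next s y.
Proof.
move=> e_irr cs /imsetP [z zs E].
have nz : z != next s z by apply: (adj_neq e_irr); apply: next_cycle.
by case: (set2_inj nz E) => [[-> ->]|[-> ->]]; [left | right].
Qed.

Section CycleSums.
Context {R : comRingType} {V : finType}.
Variable e : rel V.
Hypotheses (e_sym : symmetric e) (e_irr : irreflexive e).
Variable i : V.
Local Notation ind := (@ind R).

(* conj_congr proves equalities between conjunctions of the same atoms, up to symmetry
   of e and to the disequalities x != y implied by edges e x y. *)
Ltac split_ands :=
  repeat match goal with H : is_true (_ && _) |- _ => case/andP: H => ? ? end.
Ltac close_atom := first [ done | by rewrite eq_sym | by rewrite e_sym
  | (apply: (adj_neq e_irr); by [|rewrite e_sym])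
  | (rewrite eq_sym; apply: (adj_neq e_irr); by [|rewrite e_sym]) ].
Ltac conj_congr :=
  apply/idP/idP => ?; split_ands; repeat (apply/andP; split); close_atom.

Definition common_i j r : R := \sum_t ind (e r t && e t i && (t != j)).
Definition common_j j q : R := \sum_p ind (e q p && e p j && (p != i)).
Definition common_ij j q : R := \sum_p ind (e q p && e p j && (p != i) && e p i).
Definition degree_off j q : R := \sum_r ind (e q r && (r != i) && (r != j)).
Definition paths3_i j q : R :=
  \sum_r ind (e q r && (r != i) && (r != j)) * common_i j r.
Definition paths3_ji j q : R :=
  \sum_p ind (e q p && e p j && (p != i)) * common_i j p.
Definition common_off j p q : R := \sum_r ind (e q r && (r != i) && (r != j) && e r p).

Lemma sum_cycle3E : \sum_j \sum_p ind (uniq [:: i; j; p] && cycle e [:: i; j; p]) =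
  \sum_j ind (e i j) * \sum_k ind (e k i) * ind (e k j).
Proof.
apply: eq_bigr => j _; rewrite mulr_sumr; apply: eq_bigr => p _.
by rewrite -!ind_andb; congr ind; rewrite /= !inE !negb_or; conj_congr.
Qed.

Lemma sum_cycle4E :
  \sum_j \sum_p \sum_q ind (uniq [:: i; j; p; q] && cycle e [:: i; j; p; q]) =
  \sum_j ind (e i j) * \sum_k ind (e k j) * ind (k != i) * common_i j k.
Proof.
apply: eq_bigr => j _; rewrite mulr_sumr; apply: eq_bigr => p _.
rewrite /common_i !mulr_sumr; apply: eq_bigr => q _.
by rewrite -!ind_andb; congr ind; rewrite /= !inE !negb_or; conj_congr.
Qed.

Lemma sum_cycle5E : \sum_j \sum_p \sum_q \sum_r
    ind (uniq [:: i; j; p; q; r] && cycle e [:: i; j; p; q; r]) =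
  \sum_j ind (e i j) * \sum_k ind ((k != i) && (k != j)) *
                           (common_j j k * common_i j k - common_ij j k).
Proof.
apply: eq_bigr => j _; rewrite exchange_big mulr_sumr; apply: eq_bigr => q _.
transitivity (\sum_p ind (e i j && ((q != i) && (q != j))) *
   (ind (e q p && e p j && (p != i)) *
    \sum_r ind ((e q r && e r i && (r != j)) && (r != p)))).
  apply: eq_bigr => p _; rewrite !mulr_sumr; apply: eq_bigr => r _.
  by rewrite -!ind_andb; congr ind; rewrite /= !inE !negb_or; conj_congr.
rewrite -mulr_sumr ind_andb -mulrA; congr (_ * (_ * _)).
under eq_bigr do rewrite (sum_ind_andN (fun r => e q r && e r i && (r != j))) mulrBr.
rewrite sumrB -mulr_suml; congr (_ - _); apply: eq_bigr => p _.
by rewrite -ind_andb; congr ind; conj_congr.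
Qed.

Lemma cycle6_sum_t j p q r :
  \sum_t ind (((e r t && e t i && (t != j)) && (t != q)) && (t != p)) =
  common_i j r - ind (e r q && e q i && (q != j))
               - ind ((e r p && e p i && (p != j)) && (p != q)).
Proof.
rewrite (sum_ind_andN (fun t => (e r t && e t i && (t != j)) && (t != q))).
by rewrite (sum_ind_andN (fun t => e r t && e t i && (t != j))).
Qed.

Lemma cycle6_sum_r j p q :
  (q != i) && (q != j) -> e q p && e p j && (p != i) ->
  \sum_r ind ((e q r && (r != i) && (r != j)) && (r != p)) *
    (common_i j r - ind (e r q && e q i && (q != j))
                  - ind ((e r p && e p i && (p != j)) && (p != q))) =
  paths3_i j q - common_i j p - ind (e q i) * (degree_off j q - 1)
  - ind (e p i) * common_off j p q.
Proof.
move=> Hq Hp; set C := fun r => (e q r && (r != i) && (r != j)) && (r != p).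
transitivity (\sum_r (ind (C r) * common_i j r - ind (e q i) * ind (C r)
                      - ind (e p i) * ind (C r && e r p))).
  apply: eq_bigr => r _; case: (boolP (C r)) => Cr; rewrite /C in Cr *; last first.
    by rewrite (negbTE Cr) /= !mul0r !mulr0 !subr0.
  rewrite Cr /= !mul1r !mulr1.
  have -> : ind (e r q && e q i && (q != j)) = ind (e q i) by congr ind; conj_congr.
  by rewrite -ind_andb; congr (_ - ind _); conj_congr.
rewrite !sumrB -!mulr_sumr /C.
rewrite (sum_ind_andN_mul (fun r => e q r && (r != i) && (r != j))).
rewrite (sum_ind_andN (fun r => e q r && (r != i) && (r != j))).
have -> : e q p && (p != i) && (p != j).
  by case/andP: Hp => /andP[-> pj] ->; rewrite (adj_neq e_irr pj).
rewrite /= mul1r; congr (_ - _ * _); apply: eq_bigr => r _; congr ind; conj_congr.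
Qed.

Lemma cycle6_sum_p j q :
  \sum_p ind (e q p && e p j && (p != i)) *
     (paths3_i j q - common_i j p - ind (e q i) * (degree_off j q - 1)
      - ind (e p i) * common_off j p q) =
  common_j j q * (paths3_i j q - ind (e q i) * (degree_off j q - 1)) - paths3_ji j q
  - \sum_p ind (e q p && e p j && (p != i)) * ind (e p i) * common_off j p q.
Proof.
transitivity (\sum_p (ind (e q p && e p j && (p != i)) *
      (paths3_i j q - ind (e q i) * (degree_off j q - 1))
   - ind (e q p && e p j && (p != i)) * common_i j p
   - ind (e q p && e p j && (p != i)) * ind (e p i) * common_off j p q)).
  by apply: eq_bigr => p _; ring.
by rewrite !sumrB -mulr_suml.
Qed.

Definition cycle6_main j q : R := ind ((q != i) && (q != j)) *
  (common_j j q * (paths3_i j q - ind (e q i) * (degree_off j q - 1)) - paths3_ji j q).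
Definition cycle6_chord j : R := \sum_q ind ((q != i) && (q != j)) *
  \sum_p ind (e q p && e p j && (p != i)) * ind (e p i) * common_off j p q.

Lemma sum_cycle6E : \sum_j \sum_p \sum_q \sum_r \sum_t
    ind (uniq [:: i; j; p; q; r; t] && cycle e [:: i; j; p; q; r; t]) =
  \sum_j ind (e i j) * (\sum_q cycle6_main j q - cycle6_chord j).
Proof.
apply: eq_bigr => j _; rewrite exchange_big.
transitivity (\sum_q ind (e i j) * (ind ((q != i) && (q != j)) *
  \sum_p (ind (e q p && e p j && (p != i)) *
  \sum_r (ind ((e q r && (r != i) && (r != j)) && (r != p)) *
  \sum_t ind (((e r t && e t i && (t != j)) && (t != q)) && (t != p)))))).
  apply: eq_bigr => q _; rewrite !mulr_sumr; apply: eq_bigr => p _.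
  rewrite !mulr_sumr; apply: eq_bigr => r _; rewrite !mulr_sumr; apply: eq_bigr => t _.
  by rewrite -!ind_andb; congr ind; rewrite /= !inE !negb_or; conj_congr.
rewrite -mulr_sumr; congr (_ * _).
transitivity (\sum_q ind ((q != i) && (q != j)) *
  \sum_p ind (e q p && e p j && (p != i)) *
     (paths3_i j q - common_i j p - ind (e q i) * (degree_off j q - 1)
      - ind (e p i) * common_off j p q)).
  apply: eq_bigr => q _; case: (boolP ((q != i) && (q != j))) => Hq; last first.
    by rewrite !mul0r.
  congr (_ * _); apply: eq_bigr => p _.
  case: (boolP (e q p && e p j && (p != i))) => Hp; last by rewrite !mul0r.
  by congr (_ * _); rewrite -(cycle6_sum_r Hq Hp); apply: eq_bigr => r _; rewrite cycle6_sum_t.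
under eq_bigr do rewrite cycle6_sum_p mulrBr.
by rewrite sumrB.
Qed.

Definition triangles_off_ij m j : R := \sum_q \sum_r
  ind (e m q && e m r && e q r && (q != i) && (r != i) && (q != j) && (r != j)).
Definition triangles_off_i m : R :=
  \sum_q \sum_r ind (e m q && e m r && e q r && (q != i) && (r != i)).

Lemma sum_cycle6_chord_swap : \sum_j ind (e i j) * cycle6_chord j =
  \sum_m ind (e i m) * \sum_j ind (e j i && e j m) * triangles_off_ij m j.
Proof.
have -> : \sum_j ind (e i j) * cycle6_chord j = \sum_j \sum_p \sum_q \sum_r
   ind (e i j && ((q != i) && (q != j)) && (e q p && e p j && (p != i)) && e p i
        && (e q r && (r != i) && (r != j) && e r p)).
  apply: eq_bigr => j _; rewrite /cycle6_chord mulr_sumr [RHS]exchange_big.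
  apply: eq_bigr => q _; rewrite !mulr_sumr; apply: eq_bigr => p _.
  rewrite /common_off !mulr_sumr; apply: eq_bigr => r _.
  by rewrite -!ind_andb; congr ind; conj_congr.
have -> : \sum_m ind (e i m) * \sum_j ind (e j i && e j m) * triangles_off_ij m j =
  \sum_m \sum_j \sum_q \sum_r ind (e i m && (e j i && e j m) &&
     (e m q && e m r && e q r && (q != i) && (r != i) && (q != j) && (r != j))).
  apply: eq_bigr => m _; rewrite mulr_sumr; apply: eq_bigr => j _.
  rewrite /triangles_off_ij !mulr_sumr; apply: eq_bigr => q _.
  rewrite !mulr_sumr; apply: eq_bigr => r _.
  by rewrite -!ind_andb; congr ind; conj_congr.
rewrite exchange_big; apply: eq_bigr => p _; apply: eq_bigr => j _.
by apply: eq_bigr => q _; apply: eq_bigr => r _; congr ind; conj_congr.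
Qed.

Lemma triangles_off_ijE m j : e j i && e j m ->
  triangles_off_ij m j = triangles_off_i m - common_j m j - common_j m j.
Proof.
move=> jim; set T := fun q r => e m q && e m r && e q r && (q != i) && (r != i).
transitivity (\sum_q \sum_r ind ((T q r && (q != j)) && (r != j))).
  by apply: eq_bigr => q _; apply: eq_bigr => r _; congr ind; rewrite /T; conj_congr.
under eq_bigr do rewrite (sum_ind_andN (fun r => T _ r && (_ != j))).
rewrite sumrB exchange_big.
under eq_bigr do rewrite (sum_ind_andN (fun q => T q _)).
rewrite sumrB (sum_ind_andN (fun q => T q j)).
have -> : T j j = false by rewrite /T e_irr /= !andbF.
rewrite subr0 /triangles_off_i exchange_big.
by congr (_ - _ - _); apply: eq_bigr => r _; congr ind; rewrite /T; conj_congr.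
Qed.

Lemma triangles_off_iE m :
  triangles_off_i m = \sum_k ind (e k m) * ind (k != i) * common_j m k.
Proof.
apply: eq_bigr => q _; rewrite /common_j mulr_sumr; apply: eq_bigr => r _.
by rewrite -!ind_andb; congr ind; conj_congr.
Qed.

Lemma sum_cycle6_chordE : \sum_j ind (e i j) * cycle6_chord j =
  \sum_m ind (e i m) * ((\sum_k ind (e k i) * ind (e k m)) * triangles_off_i m
                        - 2 * \sum_k ind (e k i) * ind (e k m) * common_j m k).
Proof.
rewrite sum_cycle6_chord_swap; apply: eq_bigr => m _; congr (_ * _).
transitivity (\sum_j (ind (e j i) * ind (e j m) * triangles_off_i m
   - 2 * (ind (e j i) * ind (e j m) * common_j m j))).
  apply: eq_bigr => j _; case: (boolP (e j i && e j m)) => jim.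
    by rewrite (triangles_off_ijE jim); case/andP: jim => -> ->; rewrite /= !mul1r; ring.
  by rewrite -ind_andb (negbTE jim) /= !mul0r mulr0 subrr.
by rewrite sumrB -mulr_suml -mulr_sumr.
Qed.
End CycleSums.

Section RootedCycles.
Variables (R : realType) (dx de : nat) (V : finType) (G : graph R dx de V).
Variables (n : nat) (i : V).
Local Open Scope nat_scope.
Local Notation e := (adj G).
Local Notation edges s := (cycle_edges (tval s)).

Definition rooted_cycles := [set s : n.+3.-tuple V | is_Lcycle G s && (nth i s 0 == i)].

Lemma rooted_cyclesP s :
  s \in rooted_cycles -> [/\ uniq s, cycle e s & nth i s 0 = i].
Proof. by rewrite inE /is_Lcycle => /andP[/andP[-> ->] /eqP ->]. Qed.

Lemma rooted_cycles_eq (s s' : n.+3.-tuple V) :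
  s \in rooted_cycles -> s' \in rooted_cycles -> edges s' = edges s ->
  next s' i = next s i -> s' = s.
Proof.
move=> /rooted_cyclesP[us cs hs] /rooted_cyclesP[us' cs' hs'] E N.
have sz : size s = n.+3 by rewrite size_tuple.
have sz' : size s' = n.+3 by rewrite size_tuple.
have key k : k.+1 < n.+3 -> nth i s' k = nth i s k /\ nth i s' k.+1 = nth i s k.+1.
  elim: k => [_|k IH hk].
    split; first by rewrite hs hs'.
    by rewrite -next_nth_uniq ?sz' // -next_nth_uniq ?sz // hs hs'.
  have [IH1 IH2] := IH (ltnW hk); split => //.
  have ed : [set nth i s' k.+1; nth i s' k.+2] \in edges s.
    rewrite -E; apply/imsetP; exists (nth i s' k.+1); first by rewrite mem_nth // sz' ltnW.
    by rewrite next_nth_uniq ?sz'.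
  (* The edge of s' leaving s'_(k+1) = s_(k+1) either goes forward in s, or back to
     s_k = s'_k, which the uniqueness of the vertices of s' forbids. *)
  rewrite IH2 in ed; case: (mem_cycle_edges (adj_irr G) cs ed) => [->|H].
    by rewrite next_nth_uniq ?sz.
  have : nth i s' k.+2 = nth i s k.
    rewrite -next_nth_uniq ?sz ?(ltnW hk) // in H.
    by rewrite -(prev_next us (nth i s' k.+2)) -H prev_next.
  rewrite -IH1 => /eqP; rewrite nth_uniq ?sz' //; last by do 2 apply: ltnW.
  by rewrite gtn_eqF.
apply: val_inj; apply: (eq_from_nth (x0 := i)); first by rewrite sz sz'.
rewrite sz' => -[|k] hk; first by rewrite hs hs'.
by case: (key k hk).
Qed.

Definition flip (s : n.+3.-tuple V) : n.+3.-tuple V := rotr_tuple 1 (rev_tuple s).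

Lemma flip_rooted s : s \in rooted_cycles -> flip s \in rooted_cycles.
Proof.
case/rooted_cyclesP => us cs hs; rewrite inE /is_Lcycle /=.
rewrite rotr_uniq rev_uniq us rotr_cycle rev_cycle (@eq_cycle _ _ e) ?cs /=.
  by case: s hs {us cs} => -[|x w] //= _ ->; rewrite rev_cons rotr1_rcons.
by move=> a b /=; rewrite (adj_sym G).
Qed.

Lemma edges_flip s : s \in rooted_cycles -> edges (flip s) = edges s.
Proof.
case/rooted_cyclesP => us _ _; rewrite /cycle_edges /=.
have next_flip x : next (rotr 1 (rev s)) x = prev s x.
  by rewrite next_rotr ?rev_uniq // next_rev.
apply/setP => E; apply/imsetP/imsetP => [[x xs ->]|[z zs ->]].
  rewrite mem_rotr mem_rev in xs.
  by exists (prev s x); rewrite ?mem_prev // next_flip next_prev // setUC.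
exists (next s z); first by rewrite mem_rotr mem_rev mem_next.
by rewrite next_flip prev_next // setUC.
Qed.

Lemma next_flip s : s \in rooted_cycles -> next (flip s) i = prev s i.
Proof. by case/rooted_cyclesP => us _ _; rewrite next_rotr ?rev_uniq // next_rev. Qed.

Lemma flip_neq s : s \in rooted_cycles -> flip s != s.
Proof.
move=> s0; have [us cs hs] := rooted_cyclesP s0; apply/eqP => E.
have sz : size s = n.+3 by rewrite size_tuple.
have h1 : next s i = nth i s 1 by rewrite -{1}hs next_nth_uniq ?sz.
have N : next s i = prev s i by rewrite -(next_flip s0) E.
have : next s (nth i s 1) = i by rewrite -h1 N next_prev.
by rewrite next_nth_uniq ?sz // -{2}hs => /eqP; rewrite nth_uniq ?sz.
Qed.

Lemma edges_fiber s s' : s \in rooted_cycles -> s' \in rooted_cycles ->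
  edges s' = edges s -> s' = s \/ s' = flip s.
Proof.
move=> s0 s0' E; have [us cs _] := rooted_cyclesP s0; have [_ _ hs'] := rooted_cyclesP s0'.
have : [set i; next s' i] \in edges s.
  by rewrite -E; apply/imsetP; exists i => //; rewrite -{1}hs' mem_nth ?size_tuple.
move/(mem_cycle_edges (adj_irr G) cs) => -[H|H]; first by left; apply: rooted_cycles_eq.
right; apply: rooted_cycles_eq => //; rewrite ?flip_rooted ?edges_flip //.
by rewrite next_flip // {2}H prev_next.
Qed.

Lemma cycle_edges_rooted :
  [set cycle_edges (tval s) | s in [pred s : n.+3.-tuple V | is_Lcycle G s && (i \in tval s)]]
  = [set edges s | s in rooted_cycles].
Proof.
apply/setP => E; apply/imsetP/imsetP => [[s /andP[cyc si] ->]|[s s0 ->]].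
  exists (rot_tuple (index i s) s).
    by move: cyc; rewrite !inE /is_Lcycle /= rot_uniq rot_cycle rot_index ?eqxx ?andbT.
  case/andP: cyc => us _; rewrite /cycle_edges /=; apply/setP => E'.
  by apply/imsetP/imsetP => [[x xs ->]|[x xs ->]]; exists x;
    rewrite ?mem_rot ?next_rot // in xs *.
have [us cs hs] := rooted_cyclesP s0.
by exists s => //; rewrite inE /= /is_Lcycle us cs /= -{1}hs mem_nth ?size_tuple.
Qed.

Lemma count_cycles_rooted : count_cycles G n.+3 i * 2 = #|rooted_cycles|.
Proof.
rewrite /count_cycles cycle_edges_rooted -sum_nat_const -sum1_card.
rewrite (partition_big_imset (fun s => edges s)) /=.
apply: eq_bigr => E /imsetP [s s0 ->].
have -> : 2 = #|[set s; flip s]| by rewrite cards2 eq_sym flip_neq.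
rewrite -sum1_card; apply: eq_bigl => s'.
rewrite in_set2; apply/idP/andP => [|[s0' /eqP E']].
  by case/orP => /eqP ->; rewrite ?flip_rooted ?edges_flip.
by case: (edges_fiber s0 s0' E') => ->; rewrite eqxx ?orbT.
Qed.
End RootedCycles.

Lemma big_tuple_cons (R : nmodType) (T : finType) n (F : n.+1.-tuple T -> R) :
  \sum_t F t = \sum_x \sum_(w : n.-tuple T) F [tuple of x :: w].
Proof.
rewrite pair_big /= (reindex (fun p : T * n.-tuple T => [tuple of p.1 :: p.2])) //.
exists (fun t : n.+1.-tuple T => (thead t, [tuple of behead t])).
  by move=> [x w] _ /=; congr pair; apply: val_inj.
by move=> t _; rewrite [in RHS](tuple_eta t).
Qed.

Lemma big_tuple0 (R : nmodType) (T : finType) (F : 0.-tuple T -> R) :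
  \sum_t F t = F [tuple].
Proof. by rewrite (big_pred1 [tuple]) // => t /=; apply/esym/eqP; apply: tuple0. Qed.

Section RootedCycleSums.
Variables (R : realType) (dx de : nat) (V : finType) (G : graph R dx de V) (i : V).
Local Notation e := (adj G).
Local Notation ind := (@ind R).

Lemma card_rooted_cyclesE n : #|rooted_cycles G n i|%:R =
  \sum_(w : n.+2.-tuple V) ind (uniq (i :: w) && cycle e (i :: w)).
Proof.
rewrite -sum1_card big_mkcond natr_sum big_tuple_cons (bigD1 i) //=.
rewrite [X in _ + X]big1 ?addr0 => [|x xi]; last first.
  by apply: big1 => w _; rewrite inE /= (negPf xi) andbF.
by apply: eq_bigr => w _; rewrite inE /is_Lcycle /= eqxx andbT; case: ifP.
Qed.

Ltac expand_tuple_sums :=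
  rewrite card_rooted_cyclesE;
  repeat (rewrite big_tuple_cons; apply: eq_bigr => ? _); rewrite big_tuple0.

Lemma card_rooted_cycles3 : #|rooted_cycles G 0 i|%:R =
  \sum_j \sum_p ind (uniq [:: i; j; p] && cycle e [:: i; j; p]).
Proof. by expand_tuple_sums. Qed.

Lemma card_rooted_cycles4 : #|rooted_cycles G 1 i|%:R =
  \sum_j \sum_p \sum_q ind (uniq [:: i; j; p; q] && cycle e [:: i; j; p; q]).
Proof. by expand_tuple_sums. Qed.

Lemma card_rooted_cycles5 : #|rooted_cycles G 2 i|%:R = \sum_j \sum_p \sum_q \sum_r
  ind (uniq [:: i; j; p; q; r] && cycle e [:: i; j; p; q; r]).
Proof. by expand_tuple_sums. Qed.

Lemma card_rooted_cycles6 : #|rooted_cycles G 3 i|%:R = \sum_j \sum_p \sum_q \sum_r \sum_t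
  ind (uniq [:: i; j; p; q; r; t] && cycle e [:: i; j; p; q; r; t]).
Proof. by expand_tuple_sums. Qed.
End RootedCycleSums.

Section Ball.
Variables (R : realType) (dx de : nat) (V : finType) (G : graph R dx de V) (i : V).
Local Open Scope nat_scope.

Lemma ball_center n : i \in ball G n i.
Proof. by elim: n => [|n IH] /=; rewrite ?set11 // inE IH. Qed.

Lemma ball_grows n : n.+1 <= #|ball G n i| \/ ball G n.+1 i = ball G n i.
Proof.
elim: n => [|n IH]; first by left; rewrite /= cards1.
have [E|NE] := eqVneq (ball G n.+1 i) (ball G n i).
  right; transitivity (ball G n.+1 i :|: \bigcup_(u in ball G n.+1 i) nbhd G u) => //.
  by rewrite E; exact: E.
case: IH => [IH|E]; last by rewrite E eqxx in NE.
left; apply: leq_trans (proper_card _); first exact: IH.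
by rewrite properEneq eq_sym NE /= subsetUl.
Qed.

Lemma ball_stable n : #|V| <= n -> ball G n.+1 i = ball G n i.
Proof.
move=> hn; case: (ball_grows n) => // H.
by have := max_card (mem (ball G n i)); rewrite leqNgt (leq_ltn_trans hn H).
Qed.

Lemma ball_adj_closed n k l :
  #|V| <= n -> k \in ball G n i -> adj G k l -> l \in ball G n i.
Proof.
move=> hn kb kl; rewrite -ball_stable // /= inE.
by apply/orP; right; apply/bigcupP; exists k; rewrite ?inE.
Qed.

Lemma notin_ball_adj n k l :
  #|V| <= n -> k \notin ball G n i -> adj G k l -> l \notin ball G n i.
Proof.
move=> hn kb kl; apply: contra kb => lb.
by apply: ball_adj_closed hn lb _; rewrite adj_sym.
Qed.
End Ball.

Section CycleGNN.
Variables (R : realType) (dx de : nat).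
Local Notation ind := (@ind R).

Definition nfeat := 10%N.
Definition rowseq (l : seq R) : 'rV[R]_nfeat := \row_(k < nfeat) nth 0 l k.
Definition coord (h : 'rV[R]_nfeat) (k : nat) : R := h 0 (inord k).
Arguments rowseq : simpl never.
Arguments coord : simpl never.

Lemma coord_rowseq l k : (k < nfeat)%N -> coord (rowseq l) k = nth 0 l k.
Proof. by move=> hk; rewrite /coord /rowseq mxE inordK. Qed.

Lemma coord_sum (I : finType) (P : pred I) (F : I -> 'rV[R]_nfeat) c :
  coord (\sum_(l | P l) F l) c = \sum_(l | P l) coord (F l) c.
Proof. by rewrite /coord summxE. Qed.

Definition mark_i (h : 'rV[R]_(dx + 1 + 1)) : R := rsubmx (lsubmx h) 0 0.
Definition mark_j (h : 'rV[R]_(dx + 1 + 1)) : R := rsubmx h 0 0.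
Arguments mark_i : simpl never.
Arguments mark_j : simpl never.

Lemma mark_iE (x : 'rV[R]_dx) b b' :
  mark_i (row_mx (row_mx x (indic R b)) (indic R b')) = ind b.
Proof. by rewrite /mark_i row_mxKl row_mxKr mxE; case: b. Qed.

Lemma mark_jE (x : 'rV[R]_dx) b b' :
  mark_j (row_mx (row_mx x (indic R b)) (indic R b')) = ind b'.
Proof. by rewrite /mark_j row_mxKr mxE; case: b'. Qed.

(* Node features by position, with the letters used below: a = [k = i], b = [k = j],
   A = [k ~ i], B = [k ~ j] (layer 1); X = common_j, Y = common_i, Q = degree_off,
   T = common_ij (layer 2); W = paths3_i, Z = paths3_ji (layer 3). *)
Definition msg2 (h : 'rV[R]_nfeat) : 'rV[R]_nfeat :=
  let a := coord h 0 in let b := coord h 1 in let A := coord h 2 in let B := coord h 3 in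
  rowseq [:: B * (1 - a); A * (1 - b); (1 - a) * (1 - b); B * (1 - a) * A].
Definition msg3 (h : 'rV[R]_nfeat) : 'rV[R]_nfeat :=
  let a := coord h 0 in let b := coord h 1 in let B := coord h 3 in let Y := coord h 5 in
  rowseq [:: (1 - a) * (1 - b) * Y; B * (1 - a) * Y].
Definition upd2 (h m : 'rV[R]_nfeat) : 'rV[R]_nfeat := rowseq
  [:: coord h 0; coord h 1; coord h 2; coord h 3; coord m 0; coord m 1; coord m 2; coord m 3].
Definition upd3 (h m : 'rV[R]_nfeat) : 'rV[R]_nfeat := rowseq
  [:: coord h 0; coord h 1; coord h 2; coord h 3; coord h 4; coord h 5; coord h 6; coord h 7;
      coord m 0; coord m 1].

Definition const_nfeat := fun _ : nat => nfeat.

Definition cycle_msg (t : nat) : 'rV[R]_(hdim dx const_nfeat t) ->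
    'rV[R]_(hdim dx const_nfeat t) -> 'rV[R]_de -> 'rV[R]_nfeat :=
  match t with
  | 0 => fun _ hl _ => rowseq [:: mark_i hl; mark_j hl]
  | 1 => fun _ hl _ => msg2 hl
  | _ => fun _ hl _ => msg3 hl
  end.

Definition cycle_upd (t : nat) : 'rV[R]_(hdim dx const_nfeat t) -> 'rV[R]_nfeat ->
    'rV[R]_(hdim dx const_nfeat t.+1) :=
  match t with
  | 0 => fun h m => rowseq [:: mark_i h; mark_j h; coord m 0; coord m 1]
  | 1 => upd2
  | _ => upd3
  end.

Definition cycle_term (L : nat) (h : 'rV[R]_nfeat) : R :=
  let a := coord h 0 in let b := coord h 1 in let A := coord h 2 in let B := coord h 3 in
  let X := coord h 4 in let Y := coord h 5 in let Q := coord h 6 in let T := coord h 7 in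
  let W := coord h 8 in let Z := coord h 9 in
  match L with
  | 3 => A * B
  | 4 => B * (1 - a) * Y
  | 5 => (1 - a) * (1 - b) * (X * Y - T)
  | _ => (1 - a) * (1 - b) * (X * (W - A * (Q - 1)) - Z)
  end.
Definition common_term (h : 'rV[R]_nfeat) : R := coord h 2 * coord h 3.
Definition wedge_term (h : 'rV[R]_nfeat) : R := coord h 3 * (1 - coord h 0) * coord h 4.
Definition common_wedge_term (h : 'rV[R]_nfeat) : R := coord h 2 * coord h 3 * coord h 4.

(* For L = 6 the second summand is the chord correction of sum_cycle6_chordE. *)
Definition cycle_edge_readout (L : nat) (ms : {mset 'rV[R]_nfeat}%mset) : 'rV[R]_1 :=
  \row_(_ < 1) (\sum_(h <- ms) cycle_term L h
     - ind (L == 6) * ((\sum_(h <- ms) common_term h) * (\sum_(h <- ms) wedge_term h)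
                      - 2 * \sum_(h <- ms) common_wedge_term h)).
Definition sum_readout (ms : {mset 'rV[R]_1}%mset) : 'rV[R]_1 :=
  \row_(_ < 1) \sum_(h <- ms) h 0 0.

Definition cycle_gnn (L K : nat) (K_gt0 : (0 < K)%N) : I2GNN R dx de :=
  @MkI2GNN R dx de K K_gt0 3 const_nfeat const_nfeat cycle_msg cycle_upd 1 1
    (cycle_edge_readout L) sum_readout.
End CycleGNN.

Section CycleGNNEval.
Variables (R : realType) (dx de : nat) (V : finType) (G : graph R dx de V).
Variables (L K : nat) (K_gt0 : (0 < K)%N) (i : V).
Hypothesis hK : (#|V| <= K)%N.
Local Notation g := (@cycle_gnn R dx de L K K_gt0).
Local Notation C := (ball G K i).
Local Notation e := (adj G).
Local Notation ind := (@ind R).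

Lemma Ni_sub_ball k l : l \in Ni g G i k -> l \in C.
Proof. by rewrite inE => /andP[]. Qed.

Lemma Ni_ball k : k \in C -> Ni g G i k = nbhd G k.
Proof.
move=> kC; apply/setP => l; rewrite /Ni /Vi /= !inE kC /=.
by case kl: (e k l); rewrite ?andbT ?andbF // (ball_adj_closed hK kC kl).
Qed.

Lemma sum_Ni k (F : V -> R) :
  k \in C -> \sum_(l in Ni g G i k) F l = \sum_l ind (e k l) * F l.
Proof.
move=> kC; rewrite big_mkcond Ni_ball //; apply: eq_bigr => l _; rewrite inE.
by case: (e k l); rewrite /= ?mul1r ?mul0r.
Qed.

Section MarkedNeighbour.
Variable j : V.

Lemma hstate1E k : k \in C ->
  hstate g G i j 1 k = rowseq [:: ind (k == i); ind (k == j); ind (e k i); ind (e k j)].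
Proof.
move=> kC; rewrite [LHS]/= !coord_sum !sum_Ni // !mark_iE !mark_jE.
congr (rowseq [:: _; _; _; _]); [rewrite -(sum_ind_eq (fun l => ind (e k l)) i)
                                 | rewrite -(sum_ind_eq (fun l => ind (e k l)) j)];
  by apply: eq_bigr => l _; rewrite coord_rowseq //= ?mark_iE ?mark_jE.
Qed.

Lemma hstate2E k : k \in C -> hstate g G i j 2 k =
  rowseq [:: ind (k == i); ind (k == j); ind (e k i); ind (e k j);
             common_j e i j k; common_i e i j k; degree_off e i j k; common_ij e i j k].
Proof.
move=> kC; have -> : hstate g G i j 2 k =
  upd2 (hstate g G i j 1 k) (\sum_(l in Ni g G i k) msg2 (hstate g G i j 1 l)) by [].
under eq_bigr => l /Ni_sub_ball lC do rewrite hstate1E //.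
rewrite hstate1E // /upd2 !coord_sum !sum_Ni // !coord_rowseq //=.
by congr (rowseq [:: _; _; _; _; _; _; _; _]); apply: eq_bigr => l _;
  rewrite /msg2 !coord_rowseq //= -!ind_negb !mulrA -!ind_andb.
Qed.

Definition features k : seq R :=
  [:: ind (k == i); ind (k == j); ind (e k i); ind (e k j);
      common_j e i j k; common_i e i j k; degree_off e i j k; common_ij e i j k;
      paths3_i e i j k; paths3_ji e i j k].

Lemma hstate3E k : k \in C -> hstate g G i j 3 k = rowseq (features k).
Proof.
move=> kC; have -> : hstate g G i j 3 k =
  upd3 (hstate g G i j 2 k) (\sum_(l in Ni g G i k) msg3 (hstate g G i j 2 l)) by [].
under eq_bigr => l /Ni_sub_ball lC do rewrite hstate2E //.
rewrite hstate2E // /upd3 !coord_sum !sum_Ni // !coord_rowseq //=.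
by congr (rowseq [:: _; _; _; _; _; _; _; _; _; _]); apply: eq_bigr => l _;
  rewrite /msg3 !coord_rowseq //= -!ind_negb !mulrA -!ind_andb.
Qed.

Lemma features_notin_ball k : e i j -> k \notin C ->
  features k = [:: 0; 0; 0; 0; 0; 0; degree_off e i j k; 0; paths3_i e i j k; 0].
Proof.
move=> ij kC; have iC : i \in C := ball_center G i K.
have jC : j \in C := ball_adj_closed hK iC ij.
have neq_out x : x \in C -> (k == x) = false by move=> xC; apply: contraNF kC => /eqP ->.
have adj_out x : x \in C -> e k x = false.
  by move=> xC; apply/negP => /(notin_ball_adj hK kC); rewrite xC.
have adj2_out x p : x \in C -> e k p && e p x = false.
  move=> xC; case kp: (e k p) => //=.
  by apply/negP => /(notin_ball_adj hK (notin_ball_adj hK kC kp)); rewrite xC.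
rewrite /features !neq_out ?adj_out //.
by rewrite /common_j /common_i /common_ij /paths3_ji !big1 // => p _; rewrite adj2_out ?mul0r.
Qed.

Lemma sum_hstate3 (f : 'rV[R]_nfeat -> R) :
  (forall k, k \notin C -> f (rowseq (features k)) = 0) ->
  \sum_(h <- seq_mset [seq hstate g G i j 3 k | k <- enum (Vi g G i)]) f h =
  \sum_k f (rowseq (features k)).
Proof.
move=> f_out; rewrite (perm_big _ (perm_eq_seq_mset _)) big_map big_enum big_mkcond.
by apply: eq_bigr => k _; case: ifP => [/hstate3E -> | /negbT /f_out ->].
Qed.

Definition edge_value : R :=
  \sum_k cycle_term L (rowseq (features k))
  - ind (L == 6) * ((\sum_k common_term (rowseq (features k)))
                    * (\sum_k wedge_term (rowseq (features k)))
                    - 2 * \sum_k common_wedge_term (rowseq (features k))).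

Lemma hedgeE : e i j -> hedge g G i j 0 0 = edge_value.
Proof.
move=> ij; rewrite mxE !sum_hstate3 // => k kC; rewrite features_notin_ball //.
all: rewrite /cycle_term /common_term /wedge_term /common_wedge_term !coord_rowseq //=.
1-3: by rewrite !mul0r.
by case: L => [|[|[|[|[|[|?]]]]]]; ring.
Qed.
End MarkedNeighbour.

Lemma hnodeE : hnode g G i 0 0 = \sum_j ind (e i j) * edge_value j.
Proof.
rewrite mxE (perm_big _ (perm_eq_seq_mset _)) big_map big_enum /= big_mkcond.
apply: eq_bigr => j _; rewrite inE; case ij: (e i j); last by rewrite mul0r.
by rewrite hedgeE // mul1r.
Qed.
End CycleGNNEval.

Section CycleGNNCounts.
Variables (R : realType) (dx de : nat) (V : finType) (G : graph R dx de V).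
Variables (K : nat) (K_gt0 : (0 < K)%N) (i : V).
Hypothesis hK : (#|V| <= K)%N.
Local Notation gnn L := (@cycle_gnn R dx de L K K_gt0).
Let e_sym := adj_sym G.
Let e_irr := adj_irr G.

Lemma hnode_cycle_gnn3 : hnode (gnn 3) G i 0 0 = #|rooted_cycles G 0 i|%:R.
Proof.
rewrite hnodeE // card_rooted_cycles3 (sum_cycle3E e_sym e_irr).
apply: eq_bigr => j _; rewrite /edge_value /= mul0r subr0; congr (_ * _).
by apply: eq_bigr => k _; rewrite /cycle_term !coord_rowseq.
Qed.

Lemma hnode_cycle_gnn4 : hnode (gnn 4) G i 0 0 = #|rooted_cycles G 1 i|%:R.
Proof.
rewrite hnodeE // card_rooted_cycles4 (sum_cycle4E e_sym e_irr).
apply: eq_bigr => j _; rewrite /edge_value /= mul0r subr0; congr (_ * _).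
by apply: eq_bigr => k _; rewrite /cycle_term !coord_rowseq //= -ind_negb.
Qed.

Lemma hnode_cycle_gnn5 : hnode (gnn 5) G i 0 0 = #|rooted_cycles G 2 i|%:R.
Proof.
rewrite hnodeE // card_rooted_cycles5 (sum_cycle5E e_sym e_irr).
apply: eq_bigr => j _; rewrite /edge_value /= mul0r subr0; congr (_ * _).
by apply: eq_bigr => k _; rewrite /cycle_term !coord_rowseq //= -!ind_negb -ind_andb.
Qed.

Lemma hnode_cycle_gnn6 : hnode (gnn 6) G i 0 0 = #|rooted_cycles G 3 i|%:R.
Proof.
rewrite hnodeE // card_rooted_cycles6 (sum_cycle6E e_sym e_irr).
under eq_bigr do rewrite /edge_value /= mul1r mulrBr.
under [RHS]eq_bigr do rewrite mulrBr.
rewrite !sumrB (sum_cycle6_chordE e_sym e_irr).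
congr (_ - _); apply: eq_bigr => j _; congr (_ * _).
  by apply: eq_bigr => k _; rewrite /cycle_term !coord_rowseq //= -!ind_negb -ind_andb.
rewrite (triangles_off_iE e_sym); congr (_ * _ - 2 * _); apply: eq_bigr => k _;
  by rewrite /common_term /wedge_term /common_wedge_term !coord_rowseq //= -?ind_negb.
Qed.

Lemma hnode_cycle_gnnE n : (n < 4)%N ->
  hnode (gnn n.+3) G i 0 0 = (count_cycles G n.+3 i * 2)%:R.
Proof.
rewrite count_cycles_rooted; case: n => [|[|[|[|//]]]] _.
- exact: hnode_cycle_gnn3.
- exact: hnode_cycle_gnn4.
- exact: hnode_cycle_gnn5.
- exact: hnode_cycle_gnn6.
Qed.
End CycleGNNCounts.

Theorem theorem3 (R : realType) (dx de : nat) (L : nat)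
  (HL : L \in [:: 3; 4; 5; 6]%N)
  (V1 V2 : finType) (G1 : graph R dx de V1) (G2 : graph R dx de V2)
  (i1 : V1) (i2 : V2) :
  count_cycles G1 L i1 <> count_cycles G2 L i2 ->
  exists g : I2GNN R dx de, hnode g G1 i1 <> hnode g G2 i2.
Proof.
have [n -> n_lt4] : exists2 n, L = n.+3 & (n < 4)%N.
  by move: HL; rewrite !inE => /or4P[] /eqP ->; [exists 0 | exists 1 | exists 2 | exists 3].
move=> count_neq; pose K := (maxn #|V1| #|V2|).+1.
have K_gt0 : (0 < K)%N by [].
have hK1 : (#|V1| <= K)%N by apply/leqW/leq_maxl.
have hK2 : (#|V2| <= K)%N by apply/leqW/leq_maxr.
exists (@cycle_gnn R dx de n.+3 K K_gt0) => /(congr1 (fun h : 'rV[R]_1 => h 0 0)).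
rewrite !hnode_cycle_gnnE // => /eqP; rewrite eqr_nat eqn_mul2r /=.
by move/eqP.
Qed.
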